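(* Let $n\ge4$ be even, $p\ge n+1$ an integer, $c_1$ a positive integer, $a_k=pc_k$, $c_{k+1}=p^2c_k$, and let $T$, $I^{(j)}$, $I^{(j)}_i$ and $\lambda_1$ be as in the context. Then for every $j\ge1$: (1) $\dfrac{\lambda_1(I^{(j)}_1\cup I^{(j)}_n)}{\lambda_1(I^{(j)})}>\dfrac12$; (2) $\dfrac{\lambda_1\bigl(\bigcup_{i=2}^{n-1}I^{(j)}_i\bigr)}{\lambda_1(I^{(j)})}<\dfrac{n}{c_j}$.
   Context: $\pi$ is the permutation of $\{1,\dots,n\}$ with top row $1,2,\dots,n$ and bottom row $n,3,2,5,4,\dots,n-1,n-2,1$. Right Rauzy induction: step ''0'' when the rightmost domain (top) interval is longer, ''1'' when the rightmost image (bottom) interval is longer. For $a,c>0$, $\dot\gamma_{m,a}=1^{n-1-m}0^a10^2$, $\gamma_{a,c}=0\,\dot\gamma_{n-2,a}\cdots\dot\gamma_{2,a}\,1^{c(n-1)}$; its transition matrix $\Theta_{a,c}$ (old lengths $=\Theta_{a,c}\cdot$new lengths) has row $1=(1,c,\dots,c)$, row $n=(1,c+1,\dots,c+1)$, and for $1\le i\le(n-2)/2$: row $2i$ has $0$ in column 1, $2$ in columns $2i,2i+1$, $1$ in the other columns among $2,\dots,n$; row $2i+1$ has $a$ in column $2i$, $a+1$ in column $2i+1$, $0$ elsewhere. $\Theta_k=\Theta_{a_k,c_k}$. $T$ is an IET of $[0,1)$ with permutation $\pi$ whose right Rauzy induction path is $\gamma_{a_1,c_1}\gamma_{a_2,c_2}\cdots$;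 $I^{(j)}$ is the interval on which the induced map lives after the first $j$ blocks and $I^{(j)}_1,\dots,I^{(j)}_n$ its exchanged subintervals; lengths satisfy $\ell^{(j-1)}=\Theta_j\ell^{(j)}$. For $v\ge0$, $|v|$ is the sum of entries and $\overline v=v/|v|$. $\lambda_1$ denotes the $T$-invariant Borel probability measure such that for every $j\ge0$, $(\lambda_1(I^{(j)}_i))_i$ is a positive multiple of $\lim_{m\to\infty}\overline{\Theta_{j+1}\cdots\Theta_me_1}$. *)

From HB Require Import structures.
From mathcomp Require Import all_boot all_order all_algebra.
From mathcomp Require Import all_classical all_reals all_analysis.
Set Implicit Arguments. Unset Strict Implicit. Unset Printing Implicit Defensive.
Import Order.TTheory GRing.Theory Num.Theory.
Local Open Scope ring_scope.

(* Entry (r, s) of Theta_{a,c}, with 1-based row index r and column index s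
   (1 <= r, s <= n), exactly as in the paper:
   row 1 = (1, c, ..., c); row n = (1, c+1, ..., c+1);
   row 2i (2 <= 2i <= n-2): 0 in column 1, 2 in columns 2i, 2i+1, 1 elsewhere;
   row 2i+1 (3 <= 2i+1 <= n-1): a in column 2i, a+1 in column 2i+1, 0 elsewhere. *)
Definition theta_entry (n a c r s : nat) : nat :=
  if r == 1%N then (if s == 1%N then 1%N else c)
  else if r == n then (if s == 1%N then 1%N else c.+1)
  else if ~~ odd r then
    (if s == 1%N then 0%N else if (s == r) || (s == r.+1) then 2%N else 1%N)
  else
    (if s == r.-1 then a else if s == r then a.+1 else 0%N).

(* The n x n matrix Theta_{a,c}; the 0-based ordinal i : 'I_n stands for the
   paper's index i+1. *)
Definition Theta (R : realType) (n a c : nat) : 'M[R]_n :=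
  \matrix_(i, k) (theta_entry n a c i.+1 k.+1)%:R.

Definition e1 (R : realType) (n : nat) : 'cV[R]_n := \col_i (nat_of_ord i == 0%N)%:R.

(* Theta_{j+1} Theta_{j+2} ... Theta_m e_1 (with Theta_k = Theta_{a_k, c_k});
   the empty product (m <= j) is the identity. *)
Definition ThetaProdVec (R : realType) (n : nat) (a c : nat -> nat) (j m : nat)
  : 'cV[R]_n :=
  foldr (fun k v => Theta R n (a k) (c k) *m v) (e1 R n) (iota j.+1 (m - j)).

Definition vsum (R : realType) (n : nat) (v : 'cV[R]_n) : R := \sum_i v i ord0.
Definition vnormalize (R : realType) (n : nat) (v : 'cV[R]_n) : 'cV[R]_n :=
  (vsum v)^-1 *: v.

From mathcomp Require Import all_boot all_order all_algebra.
From mathcomp Require Import all_classical all_reals all_analysis.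
From mathcomp Require Import zify lra.
Import Order.TTheory GRing.Theory Num.Theory numFieldNormedType.Exports.

Set Implicit Arguments.
Unset Strict Implicit.
Unset Printing Implicit Defensive.

(* The vectors Theta_{j+1} ... Theta_m e_1 have natural entries and satisfy an exact
   invariant. Call u b-balanced when u_1 > 0 and b (u_2 + ... + u_{n-1}) <= n u_n.
   For n = 2h + 2, rows 1 and n of Theta_{a,c} make the new u_n at least
   (c + 1) (u_2 + ... + u_n), while each pair of middle rows 2i, 2i+1 contributes at most
   (u_2 + ... + u_n) + (a + 2) (u_{2i} + u_{2i+1}); hence Theta_{a,c} maps 2a-balanced
   vectors to c-balanced ones. As 2 a_k <= c_{k+1} and e_1 is b-balanced for every b, every
   product is c_{j+1}-balanced, so the middle intervals carry a proportion at most
   n / c_{j+1} of lambda_1(I^(j)), which is below both 1/2 and n / c_j. *)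

(* Vectors are functions [nat -> nat] indexed from 0: [u 0] and [u n.-1] are the paper's u_1
   and u_n, and [theta_mul n a c u r] is entry r+1 of Theta_{a,c} u. *)
Definition theta_mul n a c (u : nat -> nat) (r : nat) : nat :=
  \sum_(0 <= k < n) theta_entry n a c r.+1 k.+1 * u k.

Definition tail_sum n (u : nat -> nat) := \sum_(1 <= k < n) u k.

Definition middle_sum n (u : nat -> nat) := \sum_(1 <= k < n.-1) u k.

Lemma sum_nat_delta m n i (F : nat -> nat) : m <= i < n ->
  \sum_(m <= k < n) (k == i) * F k = F i.
Proof.
move=> mi; rewrite (eq_bigr (fun k => if k == i then F k else 0)).
  by rewrite -big_mkcond big_nat1_eq mi.
by move=> k _; case: eqP; rewrite ?mul1n.
Qed.

Lemma tail_sumE n (u : nat -> nat) : 1 < n -> tail_sum n u = middle_sum n u + u n.-1.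
Proof. by case: n => // n n_gt0; rewrite /tail_sum /middle_sum big_nat_recr. Qed.

Lemma theta_mul_first n a c u : 0 < n -> theta_mul n a c u 0 = u 0 + c * tail_sum n u.
Proof.
move=> n_gt0; rewrite /theta_mul big_ltn // mul1n /tail_sum big_distrr.
by congr (_ + _); apply: eq_big_nat => -[].
Qed.

Lemma theta_mul_last n a c u : 1 < n -> theta_mul n a c u n.-1 = u 0 + c.+1 * tail_sum n u.
Proof.
move=> n_gt1; rewrite /theta_mul big_ltn 1?ltnW // /theta_entry prednK 1?ltnW //.
rewrite gtn_eqF // eqxx mul1n /tail_sum big_distrr.
by congr (_ + _); apply: eq_big_nat => -[].
Qed.

Lemma theta_entry_odd_row n a c r k : odd r -> r.+2 < n ->
  theta_entry n a c r.+1 k.+1 = (0 < k) + (k == r) + (k == r.+1).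
Proof.
move=> r_odd r_lt.
rewrite /theta_entry !eqSS (ltn_eqF (ltnW r_lt)) oddS r_odd (gtn_eqF (odd_gt0 r_odd)) /=.
have [->|k_gt0] := posnP k; first by rewrite !(eq_sym 0) (gtn_eqF (odd_gt0 r_odd)).
by case: (k =P r) => [->|_]; rewrite ?(ltn_eqF (ltnSn _)) //; case: eqP.
Qed.

Lemma theta_entry_even_row n a c r k : ~~ odd n -> ~~ odd r -> 0 < r < n ->
  theta_entry n a c r.+1 k.+1 = a * (k.+1 == r) + a.+1 * (k == r).
Proof.
move=> n_even r_even /andP[r_gt0 r_lt].
have r1_ne : (r.+1 == n) = false by apply: contraNF n_even => /eqP <-; rewrite /= r_even.
rewrite /theta_entry !eqSS r1_ne oddS r_even (gtn_eqF r_gt0) /=.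
case: (k.+1 =P r) => [<-|_]; rewrite ?(ltn_eqF (ltnSn _)) ?muln0 ?muln1 ?addn0 //.
by case: eqP; rewrite ?muln1 ?muln0.
Qed.

Lemma theta_mul_odd_row n a c u r : odd r -> r.+2 < n ->
  theta_mul n a c u r = tail_sum n u + u r + u r.+1.
Proof.
move=> r_odd r_lt; rewrite /theta_mul.
under eq_bigr do rewrite theta_entry_odd_row // !mulnDl.
rewrite !big_split /= !sum_nat_delta ?(odd_gt0 r_odd) //; try lia.
congr (_ + _ + _); rewrite big_ltn; last lia.
by rewrite /= add0n; apply: eq_big_nat => k /andP[-> _]; rewrite mul1n.
Qed.

Lemma theta_mul_even_row n a c u r : ~~ odd n -> ~~ odd r -> 0 < r < n ->
  theta_mul n a c u r = a * u r.-1 + a.+1 * u r.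
Proof.
move=> n_even r_even r_bd; rewrite /theta_mul.
under eq_bigr do rewrite theta_entry_even_row // mulnDl -!mulnA.
rewrite big_split /= -!big_distrr /= sum_nat_delta; last lia.
congr (_ * _ + _); rewrite -(@sum_nat_delta 0 n r.-1); last lia.
by apply: eq_big_nat => k _; congr (_ * _); apply/eqP/eqP; lia.
Qed.

Lemma sum_nat_pairs h (w : nat -> nat) :
  \sum_(1 <= k < (2 * h).+1) w k = \sum_(0 <= i < h) (w (2 * i).+1 + w (2 * i).+2).
Proof.
elim: h => [|h IH]; first by rewrite !big_geq.
by rewrite [RHS]big_nat_recr //= -IH mulnS add2n 2?big_nat_recr //= addnA.
Qed.

Lemma middle_sum_theta_mul_le n h a c u : n = (2 * h).+2 ->
  middle_sum n (theta_mul n a c u) <= h * tail_sum n u + (a + 2) * middle_sum n u.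
Proof.
move=> nE; have -> : h * tail_sum n u = \sum_(0 <= i < h) tail_sum n u.
  by rewrite sum_nat_const_nat subn0.
rewrite /middle_sum (_ : n.-1 = (2 * h).+1); last by rewrite nE.
rewrite !sum_nat_pairs big_distrr -big_split /= big_nat_cond [leqRHS]big_nat_cond.
apply: leq_sum => i /andP[/andP[_ i_lt] _].
by rewrite theta_mul_odd_row ?theta_mul_even_row //=; lia.
Qed.

Definition e1_nat (k : nat) : nat := k == 0.

Definition balanced n b (u : nat -> nat) := (0 < u 0) && (b * middle_sum n u <= n * u n.-1).

Lemma balanced_e1 n b : balanced n b e1_nat.
Proof.
by rewrite /balanced /middle_sum big_nat_cond big1 ?muln0 // => -[].
Qed.

Lemma balancedW n b b' u : b' <= b -> balanced n b u -> balanced n b' u.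
Proof.
move=> le_b /andP[u0_gt0 bal]; rewrite /balanced u0_gt0 (leq_trans _ bal) //.
exact: leq_mul.
Qed.

Lemma balanced_theta_mul n h a c u : n = (2 * h).+2 ->
  balanced n (2 * a) u -> balanced n c (theta_mul n a c u).
Proof.
move=> nE /andP[u0_gt0 bal]; have n_gt1 : 1 < n by rewrite nE.
rewrite /balanced theta_mul_first ?theta_mul_last ?(ltnW n_gt1) // addn_gt0 u0_gt0 /=.
apply: leq_trans (leq_mul (leqnn c) (middle_sum_theta_mul_le a c u nE)) _.
rewrite tail_sumE // nE in bal *; nia.
Qed.

Definition theta_prod n (a c : nat -> nat) j d : nat -> nat :=
  foldr (fun k u => theta_mul n (a k) (c k) u) e1_nat (iota j.+1 d).

Lemma balanced_theta_prod n h (a c : nat -> nat) : n = (2 * h).+2 ->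
  (forall k, 0 < k -> 2 * a k <= c k.+1) ->
  forall j d, balanced n (c j.+1) (theta_prod n a c j d).
Proof.
move=> nE ac j d; elim: d j => [|d IH] j; first exact: balanced_e1.
by apply: balanced_theta_mul nE _; apply: balancedW (ac _ _) (IH j.+1).
Qed.

Lemma middle_sum_ord n (u : nat -> nat) : \sum_(i < n | 0 < i < n.-1) u i = middle_sum n u.
Proof.
rewrite /middle_sum (big_nat_widen _ _ n) ?leq_pred // big_geq_mkord.
by apply: eq_bigl => i; rewrite andbC.
Qed.

Lemma sum_ord_ge_last n (u : nat -> nat) : 0 < n -> u n.-1 <= \sum_(i < n) u i.
Proof.
by case: n => // n _; rewrite big_ord_recr leq_addl.
Qed.

Lemma sum_ord_ge_first n (u : nat -> nat) : 0 < n -> u 0 <= \sum_(i < n) u i.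
Proof.
by case: n => // n _; rewrite big_ord_recl leq_addr.
Qed.

Local Open Scope classical_set_scope.
Local Open Scope ring_scope.

Section RealVectors.
Variable R : realType.

Lemma Theta_mul_col n a c (u : nat -> nat) :
  Theta R n a c *m \col_i (u i)%:R = \col_i (theta_mul n a c u i)%:R.
Proof.
apply/matrixP => i k; rewrite !mxE /theta_mul big_mkord natr_sum.
by apply: eq_bigr => l _; rewrite !mxE natrM.
Qed.

Lemma ThetaProdVecE n a c j m :
  ThetaProdVec R n a c j m = \col_i (theta_prod n a c j (m - j) i)%:R.
Proof.
rewrite /ThetaProdVec /theta_prod; elim: (iota _ _) => [|k s IH] /=.
  by apply/matrixP => i k; rewrite !mxE.
by rewrite IH Theta_mul_col.
Qed.

Lemma vnormalize_col n (u : nat -> nat) i :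
  vnormalize (\col_k (u k)%:R : 'cV[R]_n) i ord0 = (u i)%:R / (\sum_(k < n) u k)%:R.
Proof.
rewrite /vnormalize /vsum natr_sum !mxE mulrC; congr (_ * _^-1).
by apply: eq_bigr => k _; rewrite mxE.
Qed.

Lemma sum_vnormalize_col n (u : nat -> nat) : (0 < \sum_(k < n) u k)%N ->
  \sum_i vnormalize (\col_k (u k)%:R : 'cV[R]_n) i ord0 = 1.
Proof.
move=> sum_gt0; under eq_bigr do rewrite vnormalize_col.
by rewrite -mulr_suml -natr_sum divff // pnatr_eq0 -lt0n.
Qed.

Lemma middle_vnormalize_col_le n b (u : nat -> nat) : (0 < n)%N -> (0 < b)%N ->
  balanced n b u ->
  \sum_(i < n | (0 < i < n.-1)%N) vnormalize (\col_k (u k)%:R : 'cV[R]_n) i ord0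
    <= n%:R / b%:R.
Proof.
move=> n_gt0 b_gt0 /andP[u0_gt0 bal].
have sum_gt0 := leq_trans u0_gt0 (sum_ord_ge_first u n_gt0).
under eq_bigr do rewrite vnormalize_col.
rewrite -mulr_suml -natr_sum middle_sum_ord.
rewrite ler_pdivrMr ?ltr0n // mulrAC ler_pdivlMr ?ltr0n // -!natrM ler_nat mulnC.
by rewrite (leq_trans bal) // leq_mul2l sum_ord_ge_last ?orbT.
Qed.

Lemma cvg_sum_ord (T : Type) (F : set_system T) n (P : pred 'I_n)
    (f : 'I_n -> T -> R) (l : 'I_n -> R) : Filter F ->
  (forall i, f i @ F --> l i) ->
  (fun x => \sum_(i < n | P i) f i x) @ F --> \sum_(i < n | P i) l i.
Proof. by move=> FF f_cvg; apply: cvg_big => //; exact: add_continuous. Qed.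

Lemma theta_prod_limit_bounds n h (a c : nat -> nat) j (l : 'I_n -> R) :
  n = (2 * h).+2 -> (forall k, (0 < k)%N -> (2 * a k <= c k.+1)%N) -> (0 < c j.+1)%N ->
  (forall i, (fun m => vnormalize (ThetaProdVec R n a c j m) i ord0) @ \oo --> l i) ->
  \sum_i l i = 1 /\ \sum_(i < n | (0 < i < n.-1)%N) l i <= n%:R / (c j.+1)%:R.
Proof.
move=> nE ac c_gt0 l_cvg; have n_gt0 : (0 < n)%N by rewrite nE.
have bal m := balanced_theta_prod nE ac j (m - j).
have pos m : (0 < \sum_(k < n) theta_prod n a c j (m - j) k)%N.
  by case/andP: (bal m) => u0_gt0 _; apply: leq_trans u0_gt0 (sum_ord_ge_first _ n_gt0).
split.
- have sum1 m : \sum_i vnormalize (ThetaProdVec R n a c j m) i ord0 = 1.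
    by rewrite ThetaProdVecE sum_vnormalize_col.
  have sum_cvg := cvg_sum_ord (P := xpredT) eventually_filter l_cvg.
  apply/eqP; rewrite eq_le (cvgr_to_le sum_cvg) ?(cvgr_to_ge sum_cvg) //;
    by apply: nearW => m; rewrite sum1.
- apply: (cvgr_to_le (cvg_sum_ord (P := fun i : 'I_n => (0 < i < n.-1)%N) _ l_cvg)).
  by apply: nearW => m; rewrite ThetaProdVecE middle_vnormalize_col_le.
Qed.

End RealVectors.

Lemma fine_measure_bigcup_ord d (T : measurableType d) (R : realType)
    (mu : {measure set T -> \bar R}) n (F : 'I_n -> set T) (P : pred 'I_n) :
  (forall i, measurable (F i)) -> (forall i k, i != k -> F i `&` F k = set0) ->
  (forall i, mu (F i) \is a fin_num) ->
  fine (mu (\bigcup_(i in [set i | P i]) F i)) = \sum_(i < n | P i) fine (mu (F i)).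
Proof.
move=> F_meas F_disj F_fin.
have -> : [set i | P i] = [set` P] by apply/seteqP; split.
rewrite measure_fin_bigcup //; last first.
  move=> i k _ _ [x [Fix Fkx]]; apply/eqP; apply: contraT => /F_disj FiFk.
  by have : (F i `&` F k) x by []; rewrite FiFk.
rewrite -(bigfs _ (r := index_enum _)) ?index_enum_uniq //; last first.
  by move=> i _; rewrite mem_index_enum.
rewrite (eq_bigr (fun i => (fine (mu (F i)))%:E)) ?sumEFin //.
by move=> i _; rewrite fineK.
Qed.

Lemma fine_measure_bigcup_ratio d (T : measurableType d) (R : realType)
    (mu : {measure set T -> \bar R}) n (F : 'I_n -> set T) (P : pred 'I_n) (t : R) :
  (forall i, measurable (F i)) -> (forall i k, i != k -> F i `&` F k = set0) ->
  (forall i, mu (F i) \is a fin_num) -> \sum_i fine (mu (F i)) / t = 1 ->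
  fine (mu (\bigcup_(i in [set i | P i]) F i)) / fine (mu (\bigcup_(i in [set: 'I_n]) F i))
    = \sum_(i < n | P i) fine (mu (F i)) / t.
Proof.
move=> F_meas F_disj F_fin sum1.
have total : \sum_i fine (mu (F i)) = t by apply: divr1_eq; rewrite mulr_suml.
have -> : [set: 'I_n] = [set i | xpredT i] by apply/seteqP; split.
by rewrite !fine_measure_bigcup_ord // total mulr_suml.
Qed.

Lemma sum_ord_ends_middle (V : nmodType) n (F : 'I_n -> V) :
  \sum_(i < n | (i == 0 :> nat) || (i == n.-1 :> nat)) F i
    + \sum_(i < n | (0 < i < n.-1)%N) F i = \sum_(i < n) F i.
Proof.
rewrite [RHS](bigID (fun i : 'I_n => (i == 0 :> nat) || (i == n.-1 :> nat))) /=.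
congr (_ + _); apply: eq_bigl => i; have := ltn_ord i.
case: (nat_of_ord i) => [|k] /= k_lt //.
by rewrite ltn_neqAle (_ : (k.+1 <= n.-1)%N) ?andbT //; lia.
Qed.

Theorem mainTheorem5 (R : realType) (n p c1 : nat) (a c : nat -> nat)
  (mu : {measure set R -> \bar R}) (I : nat -> set R) (Isub : nat -> 'I_n -> set R) :
  (4 <= n)%N -> ~~ odd n -> (n.+1 <= p)%N -> (0 < c1)%N ->
  c 1%N = c1 ->
  (forall k, (1 <= k)%N -> a k = (p * c k)%N) ->
  (forall k, (1 <= k)%N -> c k.+1 = (p ^ 2 * c k)%N) ->
  mu [set: R] = 1%E ->
  (forall j i, measurable (Isub j i)) ->
  (forall j (i k : 'I_n), i != k -> Isub j i `&` Isub j k = set0) ->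
  (forall j, I j = \bigcup_(i in [set: 'I_n]) Isub j i) ->
  (forall j, exists2 t : R, 0 < t &
     forall i : 'I_n,
       (fun m => vnormalize (ThetaProdVec R n a c j m) i ord0) @ \oo
         --> (fine (mu (Isub j i)) / t : R)) ->
  forall j, (1 <= j)%N ->
    1 / 2 < fine (mu (\bigcup_(i in [set i : 'I_n | (nat_of_ord i == 0%N) || (nat_of_ord i == n.-1)]) Isub j i))
              / fine (mu (I j))
    /\
    fine (mu (\bigcup_(i in [set i : 'I_n | (0 < nat_of_ord i < n.-1)%N]) Isub j i))
      / fine (mu (I j)) < n%:R / (c j)%:R.
Proof.
move=> n_ge4 n_even p_gt_n c1_gt0 c1E aE cE muT Isub_meas Isub_disj IE Isub_lim j j_ge1.
have [h nE] : exists h, n = (2 * h).+2.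
  exists (n./2).-1; move: (odd_double_half n); rewrite (negbTE n_even) add0n -mul2n; lia.
have c_gt0 k : (0 < k)%N -> (0 < c k)%N.
  elim: k => // -[_ _|k IH _]; first by rewrite c1E.
  by rewrite cE // muln_gt0 expn_gt0 IH //; lia.
have p2_gt : (2 * n < p ^ 2)%N by rewrite -mulnn; nia.
have two_a_le k : (0 < k)%N -> (2 * a k <= c k.+1)%N.
  by move=> k_gt0; rewrite aE // cE // mulnA leq_mul2r -mulnn leq_mul2r; lia.
have [t _ l_cvg] := Isub_lim j.
have [sum1 mid_le] := theta_prod_limit_bounds nE two_a_le (c_gt0 j.+1 isT) l_cvg.
have mu_fin i : mu (Isub j i) \is a fin_num.
  rewrite ge0_fin_numE ?measure_ge0 // (le_lt_trans _ (ltry 1)) // -muT.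
  by apply: le_measure; rewrite ?inE.
rewrite IE !(fine_measure_bigcup_ratio _ (Isub_meas j) (Isub_disj j) mu_fin sum1).
have := sum_ord_ends_middle (fun i => fine (mu (Isub j i)) / t); rewrite sum1.
set ends := \sum_(i < n | _) _; set middle := \sum_(i < n | _) _ => ends_middle.
(* the same bound, restated by conversion so that [lra] sees [middle] as a single atom *)
have {}mid_le : middle <= n%:R / (c j.+1)%:R := mid_le.
have cj_gt0 := c_gt0 j j_ge1.
have below_half : n%:R / (c j.+1)%:R < 1 / 2 :> R.
  rewrite ltr_pdivrMr ?ltr0n ?c_gt0 // mul1r mulrC ltr_pdivlMr ?ltr0n //.
  by rewrite -natrM ltr_nat cE // mulnC; apply: leq_trans p2_gt (leq_pmulr _ cj_gt0).
have below_cj : n%:R / (c j.+1)%:R < n%:R / (c j)%:R :> R.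
  rewrite ltr_pdivrMr ?ltr0n ?c_gt0 // mulrAC ltr_pdivlMr ?ltr0n //.
  by rewrite -!natrM ltr_nat cE // ltn_pmul2l ?ltn_Pmull //; lia.
split; lra.
Qed.
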